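(* Let $n\ge1$ and $s\ge 0$, and assume either $n$ is even and $s\le n$, or $n$ is odd and $s\le n-1$. Let $e$ be the greatest even integer with $e\le s$. Then $$\max\{\operatorname{per}(I-A): A\in\tilde\omega_n^s\}=2^{e/2}\Big[1+\Big(\frac{s-e}{2}\Big)^2\Big].$$ Moreover the maximum is attained by the doubly substochastic matrix $M_2\oplus\cdots\oplus M_2\oplus S_2\oplus\mathbf 0_{n-e-2}$ (with $e/2$ copies of $M_2$; when $s=e$ the factors $S_2$ and zero block may be replaced by $\mathbf 0_{n-e}$), where $M_2=\begin{pmatrix}0&1\\1&0\end{pmatrix}$ and $S_2=\begin{pmatrix}0&\frac{s-e}{2}\\\frac{s-e}{2}&0\end{pmatrix}$.
   Context: An $n\times n$ matrix is row substochastic if all entries are nonnegative and each row sum is at most $1$; doubly substochastic if additionally each column sum is at most $1$. $\sigma(A)$ is the sum of all entries of $A$, and $\tilde\omega_n^s$ is the set of $n\times n$ row substochastic matrices $A$ with $\sigma(A)=s$. $\oplus$ is block-diagonal direct sum, $\mathbf 0_m$ the $m\times m$ zero matrix. The permanent is $\operatorname{per}(M)=\sum_{\pi\in S_n}\prod_i m_{i\pi(i)}$, and $I$ is the identity matrix. *)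

From HB Require Import structures.
From mathcomp Require Import all_boot all_order all_fingroup all_algebra.
Set Implicit Arguments. Unset Strict Implicit. Unset Printing Implicit Defensive.
Import Order.TTheory GRing.Theory Num.Theory.
Local Open Scope ring_scope.

Definition per (R : comNzRingType) (n : nat) (M : 'M[R]_n) : R :=
  \sum_(p : 'S_n) \prod_(i < n) M i (p i).

Definition sigma (R : comNzRingType) (n : nat) (A : 'M[R]_n) : R :=
  \sum_(i < n) \sum_(j < n) A i j.

Definition row_substochastic (R : numDomainType) (n : nat) (A : 'M[R]_n) : Prop :=
  (forall i j, 0 <= A i j) /\ (forall i, \sum_(j < n) A i j <= 1).

Definition doubly_substochastic (R : numDomainType) (n : nat) (A : 'M[R]_n) : Prop :=
  row_substochastic A /\ (forall j, \sum_(i < n) A i j <= 1).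

Definition omega_tilde (R : numDomainType) (n : nat) (s : R) (A : 'M[R]_n) : Prop :=
  row_substochastic A /\ sigma A = s.

(* The n x n matrix  M_2 (+) ... (+) M_2 (+) S_2 (+) 0_{n-e-2}  (e/2 copies of M_2),
   written entrywise: indices are grouped in consecutive pairs {2k, 2k+1};
   pairs with 2k < e carry the block M_2 = [[0,1],[1,0]], the pair {e, e+1}
   carries S_2 = [[0,c],[c,0]] with c = (s-e)/2, and all other entries are 0. *)
Definition extremal_matrix (R : numFieldType) (n e : nat) (s : R) : 'M[R]_n :=
  \matrix_(i < n, j < n)
    if ((i : nat)./2 == (j : nat)./2)%N && (i != j :> nat) then
      (if ((i : nat) < e)%N then 1
       else if ((i : nat)./2 == e./2)%N then (s - e%:R) / 2%:R else 0)
    else 0.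

From HB Require Import structures.
From mathcomp Require Import all_boot all_order all_fingroup all_algebra.
From mathcomp Require Import zify ring lra.
Set Implicit Arguments. Unset Strict Implicit. Unset Printing Implicit Defensive.
Import Order.TTheory GRing.Theory Num.Theory.
Local Open Scope ring_scope.

(* Each row of a row-substochastic [A] is its row sum times a probability vector,
   and the permanent is multilinear in the rows, so [per (1 - A)] is a convex
   combination of [per (1 - B)] for matrices [B] with a single entry [r i] in each
   row [i], in some column [t i], and the same row sums.  Such a [per (1 - B)] is
   computed by peeling off rows: a diagonal entry contributes a factor [1 - r i],
   an entry in a column reached by no other nonzero row can be dropped, and
   otherwise [t] permutes the support, and dropping one of its cycles multiplies
   the permanent by [1 +- P], [P] the product of the entries of the cycle.  By
   induction on the support, elementary inequalities on these factors give
   [per (1 - B) <= 2^m (1 + ((S - 2m)/2)^2)] for [S] the sum of the entries and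
   [2m <= S <= 2m + 2].  The extremal matrix is of this form, with [t] the
   product of the transpositions [(2j, 2j+1)], and attains the bound. *)

Lemma perm_of_surj_on (T : finType) (A : {set T}) (t : T -> T) :
  A \subset t @: A -> exists p : {perm T}, forall x, x \in A -> p x = t x /\ t x \in A.
Proof.
move=> surj; have eqA : A = t @: A by apply/eqP; rewrite eqEcard surj leq_imset_card.
have injA : {in A &, injective t} by apply/imset_injP; rewrite -eqA.
have tA x : x \in A -> t x \in A by move=> Ax; rewrite eqA imset_f.
have ext_inj : injective (fun x => if x \in A then t x else x).
  move=> x y /=; case: ifP => Ax; case: ifP => Ay //; first exact: injA.
  - by move=> txy; rewrite -txy tA in Ay.
  - by move=> xty; rewrite xty tA in Ax.
by exists (perm ext_inj) => x Ax; rewrite permE Ax tA.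
Qed.

Section FunctionalMatrix.
Variables (R : idomainType) (n : nat).
Implicit Types (t : 'I_n -> 'I_n) (r : 'I_n -> R) (s : 'S_n) (C : {set 'I_n}).

Definition per_term (M : 'M[R]_n) s : R := \prod_i M i (s i).

Lemma perE (M : 'M[R]_n) : per M = \sum_s per_term M s.
Proof. by []. Qed.

Lemma per1 : per (1%:M : 'M[R]_n) = 1.
Proof.
rewrite /per (bigD1 1%g) //= big1 => [|i _]; last by rewrite perm1 mxE eqxx.
rewrite big1 ?addr0 // => s s1.
have [i si] : exists i, s i != i.
  apply/existsP; apply: contraR s1 => /existsPn fix_s.
  by apply/eqP/permP => i; rewrite perm1; apply/eqP/negPn.
by rewrite (bigD1 i) //= mxE eq_sym (negbTE si) mul0r.
Qed.

Definition fun_mx t r : 'M[R]_n := \matrix_(i, j) (r i * (j == t i)%:R).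

Definition zero_on C r (x : 'I_n) : R := if x \in C then 0 else r x.

Lemma IB_fun_mxE t r x y :
  (1%:M - fun_mx t r) x y = (x == y)%:R - r x * (y == t x)%:R.
Proof. by rewrite !mxE. Qed.

Lemma eq_fun_mx t r1 r2 : r1 =1 r2 -> fun_mx t r1 = fun_mx t r2.
Proof. by move=> eq_r; apply/matrixP => x y; rewrite !mxE eq_r. Qed.

Lemma per_IB_fun_mx0 t r : (forall x, r x = 0) -> per (1%:M - fun_mx t r) = 1.
Proof.
move=> r0; suff -> : fun_mx t r = 0 by rewrite subr0 per1.
by apply/matrixP => x y; rewrite !mxE r0 mul0r.
Qed.

Lemma per_term_fun_mx_neq0 t r s x :
  per_term (1%:M - fun_mx t r) s != 0 -> s x = x \/ s x = t x.
Proof.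
move=> /prodf_neq0 /(_ x isT); rewrite IB_fun_mxE.
have [<-|_] := eqVneq x (s x); first by left.
have [->|_] := eqVneq (s x) (t x); first by right.
by rewrite mulr0 subr0 eqxx.
Qed.

Lemma per_IB_fun_mx_fixed t r i : t i = i ->
  per (1%:M - fun_mx t r) = (1 - r i) * per (1%:M - fun_mx t (zero_on [set i] r)).
Proof.
move=> ti; rewrite /per big_distrr; apply: eq_bigr => s _.
rewrite (bigD1 i) //= [in RHS](bigD1 i) //= mulrA; congr (_ * _).
  rewrite !IB_fun_mxE /zero_on inE eqxx mul0r subr0 ti.
  by rewrite [s i == i]eq_sym; case: eqP => _ /=; ring.
by apply: eq_bigr => x xi; rewrite !IB_fun_mxE /zero_on inE (negbTE xi).
Qed.

(* If no row with a nonzero entry points to column [i], a nonvanishing term must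
   fix [i], and then row [i] contributes the factor [1] whatever [r i] is. *)
Lemma per_IB_fun_mx_unreached t r i : t i != i -> (forall k, t k = i -> r k = 0) ->
  per (1%:M - fun_mx t r) = per (1%:M - fun_mx t (zero_on [set i] r)).
Proof.
move=> ti unreached; rewrite !perE; apply: eq_bigr => s _.
have [si|si] := eqVneq (s i) i.
  apply: eq_bigr => x _; rewrite !IB_fun_mxE /zero_on inE.
  have [->|//] := eqVneq x i; rewrite si eqxx mul0r.
  by rewrite eq_sym (negbTE ti) mulr0.
have -> : per_term (1%:M - fun_mx t (zero_on [set i] r)) s = 0.
  rewrite /per_term (bigD1 i) //= IB_fun_mxE /zero_on inE eqxx mul0r subr0.
  by rewrite eq_sym (negbTE si) mul0r.
set k := (s^-1)%g i.
have sk : s k = i by rewrite /k permKV.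
have ki : k != i by apply: contraNneq si => ki; rewrite -{1}ki sk.
rewrite /per_term (bigD1 k) //= IB_fun_mxE sk (negbTE ki).
have [tk|] := eqVneq i (t k); first by rewrite unreached // mul0r subr0 mul0r.
by rewrite mulr0 subr0 mul0r.
Qed.

Section Cycle.
Variables (t : 'I_n -> 'I_n) (r : 'I_n -> R) (p : {perm 'I_n}) (i : 'I_n).
Hypothesis t_on_orbit : forall y, fconnect p i y -> t y = p y /\ p y != y.
Let C := [set y | fconnect p i y].

Lemma mem_orbit_perm y : (p y \in C) = (y \in C).
Proof. by rewrite !inE -same_fconnect1_r //; exact: perm_inj. Qed.

Lemma mem_orbit_root : i \in C.
Proof. by rewrite inE connect0. Qed.

Lemma t_on_orbit_mem y : y \in C -> t y = p y /\ p y != y.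
Proof. by rewrite inE => /t_on_orbit. Qed.

Lemma cycle_of_orbit_inj : injective (fun x => if x \in C then p x else x).
Proof.
move=> x y /=; case: ifP => Cx; case: ifP => Cy //; first exact: perm_inj.
- by move=> pxy; rewrite -mem_orbit_perm pxy Cy in Cx.
- by move=> xpy; rewrite -mem_orbit_perm -xpy Cx in Cy.
Qed.

Let cyc := perm cycle_of_orbit_inj.

Lemma cycE y : cyc y = if y \in C then p y else y.
Proof. by rewrite permE. Qed.

Lemma term_moved_iter s x k : per_term (1%:M - fun_mx t r) s != 0 ->
  x \in C -> s x != x -> s (iter k p x) != iter k p x /\ iter k p x \in C.
Proof.
move=> s_term Cx sx; elim: k => [|k [IHs IHC]] //=; split; last by rewrite mem_orbit_perm.
have [tE p_moves] := t_on_orbit_mem IHC.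
have spx : s (iter k p x) = p (iter k p x).
  by case: (per_term_fun_mx_neq0 (iter k p x) s_term) => [sxx|->//]; rewrite sxx eqxx in IHs.
apply/eqP => spp; have /perm_inj pxx : s (p (iter k p x)) = s (iter k p x) by rewrite spp spx.
by rewrite pxx eqxx in p_moves.
Qed.

Lemma term_fix_orbit s : per_term (1%:M - fun_mx t r) s != 0 -> s i = i ->
  forall y, y \in C -> s y = y.
Proof.
move=> s_term si y Cy; apply/eqP; apply: contraT => sy.
have : fconnect p y i by rewrite fconnect_sym; [rewrite inE in Cy | exact: perm_inj].
move/iter_findex => yi; have [] := term_moved_iter (findex p y i) s_term Cy sy.
by rewrite yi si eqxx.
Qed.

Lemma term_follow_orbit s : per_term (1%:M - fun_mx t r) s != 0 -> s i != i ->
  forall y, y \in C -> s y = p y.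
Proof.
move=> s_term si y Cy; have := Cy; rewrite inE => /iter_findex iy.
have [] := term_moved_iter (findex p i y) s_term mem_orbit_root si.
rewrite iy => sy _; have [<- _] := t_on_orbit_mem Cy.
by case: (per_term_fun_mx_neq0 y s_term) => [syy|//]; rewrite syy eqxx in sy.
Qed.

Lemma per_term_zero_orbit s : (forall y, y \in C -> s y = y) ->
  per_term (1%:M - fun_mx t (zero_on C r)) s = per_term (1%:M - fun_mx t r) s.
Proof.
move=> s_fix; apply: eq_bigr => x _; rewrite !IB_fun_mxE /zero_on.
case: ifP => Cx //; rewrite s_fix // eqxx mul0r.
by have [-> p_moves] := t_on_orbit_mem Cx; rewrite eq_sym (negbTE p_moves) mulr0.
Qed.

Lemma per_term_zero_orbit_moved s y : y \in C -> s y != y ->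
  per_term (1%:M - fun_mx t (zero_on C r)) s = 0.
Proof.
move=> Cy sy; apply/eqP/prodf_eq0; exists y => //.
by rewrite IB_fun_mxE /zero_on Cy mul0r subr0 [y == _]eq_sym (negbTE sy).
Qed.

(* A nonvanishing term either fixes the whole cycle or follows it; composing with
   [cyc] turns the terms of the second kind into those of the first kind, each
   multiplied by the product of the entries [- r x] of the cycle. *)
Lemma per_IB_fun_mx_cycle : per (1%:M - fun_mx t r) =
  per (1%:M - fun_mx t (zero_on C r)) * (1 + (-1) ^+ #|C| * \prod_(x in C) r x).
Proof.
rewrite mulrDr mulr1 !perE (bigID (fun s : 'S_n => s i == i)) /=; congr (_ + _).
  rewrite [RHS](bigID (fun s : 'S_n => s i == i)) /= [X in _ = _ + X]big1 ?addr0;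
    last by move=> s si; apply: (per_term_zero_orbit_moved mem_orbit_root si).
  apply: eq_bigr => s /eqP si.
  have [s_term|s_term] := eqVneq (per_term (1%:M - fun_mx t r) s) 0.
    case/boolP: [forall y in C, s y == y] => [/forall_inP s_fix|].
      by rewrite per_term_zero_orbit // => y /s_fix/eqP.
    by case/forall_inPn => y Cy sy; rewrite s_term (per_term_zero_orbit_moved Cy sy).
  by rewrite per_term_zero_orbit //; apply: term_fix_orbit.
rewrite mulrC big_distrr /= (reindex_inj (@mulIg _ cyc)) /= big_mkcond /=.
apply: eq_bigr => s _.
case/boolP: [forall y in C, s y == y] => [/forall_inP s_fix|]; last first.
  case/forall_inPn => y Cy sy; rewrite (per_term_zero_orbit_moved Cy sy) mulr0.
  case: ifP => // cs_moves; apply/eqP; apply: contraT => s_term.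
  have cyc_y : cyc y = p y by rewrite cycE Cy.
  have := term_follow_orbit s_term cs_moves Cy.
  by rewrite permM -cyc_y => /perm_inj syy; rewrite syy eqxx in sy.
have {}s_fix y : y \in C -> s y = y by move/s_fix/eqP.
rewrite permM s_fix ?mem_orbit_root // cycE mem_orbit_root.
have [_ ->] := t_on_orbit_mem mem_orbit_root.
rewrite /per_term (bigID (mem C)) /= [X in _ = _ * X](bigID (mem C)) /=.
rewrite [X in _ = _ * (X * _)]big1 => [|x Cx]; last first.
  by rewrite IB_fun_mxE /zero_on Cx s_fix // eqxx mul0r subr0.
rewrite mul1r; congr (_ * _).
  rewrite -prodrN; apply: eq_bigr => x Cx; have [tE p_moves] := t_on_orbit_mem Cx.
  by rewrite permM s_fix // cycE Cx IB_fun_mxE tE eqxx mulr1 eq_sym (negbTE p_moves) sub0r.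
apply: eq_bigr => x Cx; rewrite permM cycE.
have -> : (s x \in C) = false.
  by apply/negbTE; apply: contra Cx => Csx; move: (s_fix _ Csx) => /perm_inj <-.
by rewrite !IB_fun_mxE /zero_on (negbTE Cx).
Qed.

End Cycle.

Lemma per_IB_fun_mx_support_cycle t r i : r i != 0 ->
  (forall x, r x != 0 -> t x != x) -> [set x | r x != 0] \subset t @: [set x | r x != 0] ->
  exists C j, [/\ i \in C, j \in C, i != j & per (1%:M - fun_mx t r) =
    per (1%:M - fun_mx t (zero_on C r)) * (1 + (-1) ^+ #|C| * \prod_(x in C) r x)].
Proof.
move=> ri moves surj; have [p ptA] := perm_of_surj_on surj.
have orbitA k : iter k p i \in [set x | r x != 0].
  by elim: k => /= [|k IHk]; [rewrite inE | have [-> ->] := ptA _ IHk].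
have t_on_orbit y : fconnect p i y -> t y = p y /\ p y != y.
  move=> /iter_findex <-; have rz := orbitA (findex p i y).
  by have [-> _] := ptA _ rz; split=> //; apply: moves; rewrite inE in rz.
have [_ pi_i] := t_on_orbit i (connect0 _ _).
exists [set y | fconnect p i y], (p i).
by rewrite !inE connect0 fconnect1 eq_sym pi_i (per_IB_fun_mx_cycle r t_on_orbit).
Qed.

End FunctionalMatrix.

Section MaxPer.
Variable R : realFieldType.
Implicit Types (m : nat) (S t P X : R).

(* For [2 m <= S <= 2 m + 2] this is the claimed maximum [2^m (1 + ((S - 2m)/2)^2)];
   the positive part makes it nondecreasing in [S] for every [m]. *)
Definition maxper m S : R := 2 ^+ m * (1 + (Num.max 0 (S - 2 * m%:R) / 2) ^+ 2).

Lemma max0_cases (x : R) : (0 <= x /\ Num.max 0 x = x) \/ (x < 0 /\ Num.max 0 x = 0).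
Proof.
by case: (lerP 0 x) => x0; [left; split; rewrite ?max_r | right; split; rewrite ?max_l // ltW].
Qed.

Lemma maxper_above m S : 2 * m%:R <= S ->
  maxper m S = 2 ^+ m * (1 + ((S - 2 * m%:R) / 2) ^+ 2).
Proof. by move=> mS; rewrite /maxper max_r // subr_ge0. Qed.

Lemma maxper_ge1 m S : 1 <= maxper m S.
Proof.
rewrite -[1]mul1r /maxper; apply: ler_pM; rewrite ?ler01 ?exprn_ege1 //; first lra.
by rewrite lerDl sqr_ge0.
Qed.

Lemma maxper_mono m : {homo maxper m : S1 S2 / S1 <= S2}.
Proof.
move=> S1 S2 S12; rewrite /maxper; apply: ler_wpM2l; first exact: exprn_ge0.
rewrite lerD2l !expr2.
case: (max0_cases (S1 - 2 * m%:R)) => [[? ->]|[? ->]];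
case: (max0_cases (S2 - 2 * m%:R)) => [[? ->]|[? ->]]; nra.
Qed.

Lemma maxper_mul_le m S t P : 2 * m%:R <= S -> S + t <= 2 * m%:R + 2 ->
  0 <= t -> 0 <= P -> P <= (t / 2) ^+ 2 -> maxper m S * (1 + P) <= maxper m (S + t).
Proof.
move=> mS Stm t0 P0 Pt; rewrite !maxper_above ?(le_trans mS) ?lerDl // -mulrA.
apply: ler_wpM2l; first exact: exprn_ge0.
have -> : S + t - 2 * m%:R = (S - 2 * m%:R) + t by ring.
have a0 : 0 <= S - 2 * m%:R by rewrite subr_ge0.
have at2 : (S - 2 * m%:R) + t <= 2 by lra.
move: (S - 2 * m%:R) a0 at2 => a a0 at2.
have at1 : a * t <= 1.
  have := sqr_ge0 (a - t); have : 0 <= (2 - (a + t)) * (2 + (a + t)).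
    by apply: mulr_ge0; lra.
  rewrite expr2; nra.
have : (1 + (a / 2) ^+ 2) * (1 + P) <= (1 + (a / 2) ^+ 2) * (1 + (t / 2) ^+ 2).
  by apply: ler_wpM2l; [rewrite expr2; nra | lra].
have : 0 <= (a * t) * (1 - a * t) by apply: mulr_ge0; [apply: mulr_ge0 | lra].
rewrite !expr2; nra.
Qed.

Lemma one_add_sqr_mul_le (x y z : R) : 0 <= x <= 1 -> 0 <= y <= 1 -> 0 <= z ->
  x + y - 1 <= z -> (1 + x ^+ 2) * (1 + y ^+ 2) <= 2 * (1 + z ^+ 2).
Proof.
move=> /andP[x0 x1] /andP[y0 y1] z0 xyz; rewrite !expr2.
have [xy1|xy1] := lerP (x + y) 1.
  have : 0 <= (x * y) * (2 - x * y) by apply: mulr_ge0; nra.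
  nra.
have : 0 <= (1 - x) * (1 - y) * (2 * (2 - x - y) - (1 - x) * (1 - y)).
  by apply: mulr_ge0; nra.
nra.
Qed.

Lemma maxper_mul_sqr_le m S t : S <= 2 * m%:R + 2 -> 0 <= t <= 2 ->
  maxper m S * (1 + (t / 2) ^+ 2) <= maxper m.+1 (S + t).
Proof.
move=> Sm /andP[t0 t2]; rewrite /maxper [2 ^+ m.+1]exprS [m.+1%:R]mulrSr.
set b := Num.max 0 (S - _); set d := Num.max 0 (S + t - _).
have [b0 b2] : 0 <= b /\ b <= 2.
  by rewrite /b; case: (max0_cases (S - 2 * m%:R)) => [[? ->]|[? ->]]; lra.
have [d0 bd] : 0 <= d /\ b + t - 2 <= d.
  rewrite /b /d; case: (max0_cases (S - 2 * m%:R)) => [[? ->]|[? ->]];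
  case: (max0_cases (S + t - 2 * (m%:R + 1))) => [[? ->]|[? ->]]; lra.
have : (1 + (b / 2) ^+ 2) * (1 + (t / 2) ^+ 2) <= 2 * (1 + (d / 2) ^+ 2).
  by apply: one_add_sqr_mul_le; rewrite ?divr_ge0 //; lra.
have : 0 <= 2 ^+ m :> R by apply: exprn_ge0.
move: (2 ^+ m) (1 + (b / 2) ^+ 2) (1 + (t / 2) ^+ 2) (1 + (d / 2) ^+ 2) => M B T D.
by move=> M0 BTD; rewrite -!mulrA [2 * _]mulrCA; apply: ler_wpM2l.
Qed.

Definition maxper_bounded X S : Prop :=
  0 <= X /\ forall m, S <= 2 * m%:R + 2 -> X <= maxper m S.

Lemma maxper_bounded1 S : maxper_bounded 1 S.
Proof. by split=> [|m _]; rewrite ?ler01 ?maxper_ge1. Qed.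

Lemma maxper_bounded_scale X S S' f : maxper_bounded X S -> 0 <= f <= 1 -> S <= S' ->
  maxper_bounded (X * f) S'.
Proof.
move=> [X0 XS] /andP[f0 f1] SS'; split=> [|m mS']; first exact: mulr_ge0.
have XSm : X <= maxper m S by apply: XS; lra.
have := maxper_mono m SS'; have : X * f <= X by rewrite ler_piMr.
lra.
Qed.

Lemma maxper_bounded_cycle X S t P : maxper_bounded X S -> 0 <= S -> 0 <= t ->
  0 <= P <= 1 -> P <= (t / 2) ^+ 2 -> maxper_bounded (X * (1 + P)) (S + t).
Proof.
move=> [X0 XS] S0 t0 /andP[P0 P1] Pt; split=> [|m mSt]; first by apply: mulr_ge0; lra.
have [mS|Sm] := lerP (2 * m%:R) S.
  apply: le_trans (maxper_mul_le mS mSt t0 P0 Pt).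
  by apply: ler_wpM2r; [lra | apply: XS; lra].
case: m mSt Sm => [|m] mSt Sm; first by rewrite mulr0 in Sm; lra.
rewrite [m.+1%:R]mulrSr in mSt Sm.
have [u [/andP[u0 u2] ut Pu]] : exists u, [/\ 0 <= u <= 2, u <= t & P <= (u / 2) ^+ 2].
  case: (lerP t 2) => t2; first by exists t; rewrite t0 t2 lexx.
  by exists 2; rewrite ler0n lexx ltW // divff ?expr1n ?pnatr_eq0.
apply: le_trans (maxper_mono _ (_ : S + u <= S + t)); last by lra.
apply: le_trans (maxper_mul_sqr_le (_ : S <= 2 * m%:R + 2) _); [|lra|by rewrite u0].
apply: ler_pM; [exact: X0 | lra | apply: XS; lra | lra].
Qed.

End MaxPer.

Lemma prod_le_sqr_half_sum (R : realFieldType) (I : finType) (C : {set I}) (r : I -> R) i j :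
  (forall x, 0 <= r x <= 1) -> i \in C -> j \in C -> i != j ->
  \prod_(x in C) r x <= ((\sum_(x in C) r x) / 2) ^+ 2.
Proof.
move=> r01 Ci Cj ij; have Cj' : j \in C :\ i by rewrite in_setD1 eq_sym ij Cj.
rewrite (big_setD1 i Ci) (big_setD1 j Cj') (big_setD1 i Ci) (big_setD1 j Cj') /=.
set Q := \prod_(x in _) _; set T := \sum_(x in _) _.
have [Q0 Q1] : 0 <= Q /\ Q <= 1.
  by split; [apply: prodr_ge0 | apply: prodr_ile1] => x _; case/andP: (r01 x).
have T0 : 0 <= T by apply: sumr_ge0 => x _; case/andP: (r01 x).
have /andP[ri0 ri1] := r01 i; have /andP[rj0 rj1] := r01 j.
have : r i * r j * Q <= r i * r j by rewrite ler_piMr ?mulr_ge0.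
have := sqr_ge0 (r i - r j); rewrite !expr2; nra.
Qed.

Section FunctionalBound.
Variables (R : realFieldType) (n : nat).
Implicit Types (t : 'I_n -> 'I_n) (r : 'I_n -> R) (C : {set 'I_n}).

Lemma sum_zero_on C r :
  \sum_x r x = \sum_x zero_on C r x + \sum_(x in C) r x.
Proof.
rewrite (bigID (mem C)) [X in _ = X + _](bigID (mem C)) /=.
rewrite [X in _ = X + _ + _]big1 => [|x Cx]; last by rewrite /zero_on Cx.
rewrite add0r addrC; congr (_ + _).
by apply: eq_bigr => x /negbTE Cx; rewrite /zero_on Cx.
Qed.

Lemma zero_on_range C r : (forall x, 0 <= r x <= 1) -> forall x, 0 <= zero_on C r x <= 1.
Proof. by move=> r01 x; rewrite /zero_on; case: ifP; rewrite ?lexx ?ler01. Qed.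

Lemma sum_zero_on_le C r : (forall x, 0 <= r x) -> \sum_x zero_on C r x <= \sum_x r x.
Proof. by move=> r0; rewrite (sum_zero_on C r) lerDl sumr_ge0. Qed.

Lemma card_support_zero_on C r i k : i \in C -> r i != 0 ->
  (#|[set x | r x != 0%R]| <= k.+1)%N -> (#|[set x | zero_on C r x != 0%R]| <= k)%N.
Proof.
move=> Ci ri supp_r; rewrite -ltnS; apply: leq_trans supp_r.
apply: proper_card; apply/properP; split; last by exists i; rewrite !inE /zero_on ?Ci ?eqxx.
by apply/subsetP => x; rewrite !inE /zero_on; case: ifP; rewrite ?eqxx.
Qed.

(* [i] and [j] give [P <= (T / 2)^2] for the product [P] and sum [T] of the entries
   of the cycle, which bounds the factor [1 + P] of an even cycle. *)
Lemma maxper_bounded_cycle_split (X Y : R) C r i j :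
  (forall x, 0 <= r x <= 1) -> i \in C -> j \in C -> i != j ->
  X = Y * (1 + (-1) ^+ #|C| * \prod_(x in C) r x) ->
  maxper_bounded Y (\sum_x zero_on C r x) -> maxper_bounded X (\sum_x r x).
Proof.
move=> r01 Ci Cj ij XY Ybound; rewrite (sum_zero_on C r).
have PT := prod_le_sqr_half_sum r01 Ci Cj ij.
have /andP[P0 P1] : 0 <= \prod_(x in C) r x <= 1.
  by apply/andP; split; [apply: prodr_ge0 | apply: prodr_ile1] => x _; case/andP: (r01 x).
have T0 : 0 <= \sum_(x in C) r x by apply: sumr_ge0 => x _; case/andP: (r01 x).
have S0 : 0 <= \sum_x zero_on C r x.
  by apply: sumr_ge0 => x _; case/andP: (zero_on_range C r01 x).
move: XY; rewrite -signr_odd; case: (odd #|C|) => ->.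
  apply: maxper_bounded_scale Ybound _ _; last by rewrite lerDl.
  by rewrite expr1 mulN1r; apply/andP; split; lra.
by rewrite expr0 mul1r; apply: maxper_bounded_cycle => //; apply/andP.
Qed.

Lemma per_IB_fun_mx0_bounded t r : (forall x, r x = 0) ->
  maxper_bounded (per (1%:M - fun_mx t r)) (\sum_x r x).
Proof. by move=> r0; rewrite per_IB_fun_mx0 // big1 //; apply: maxper_bounded1. Qed.

Lemma per_IB_fun_mx_bounded k t r : (forall x, 0 <= r x <= 1) ->
  (#|[set x | r x != 0%R]| <= k)%N ->
  maxper_bounded (per (1%:M - fun_mx t r)) (\sum_x r x).
Proof.
elim: k t r => [|k IH] t r r01 supp.
  apply: per_IB_fun_mx0_bounded => x; apply/eqP/negPn/negP => rx.
  by move: supp; rewrite leqn0 cards_eq0 => /eqP/setP/(_ x); rewrite !inE rx.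
have r0 x : 0 <= r x by case/andP: (r01 x).
have IHC C i : i \in C -> r i != 0 ->
    maxper_bounded (per (1%:M - fun_mx t (zero_on C r))) (\sum_x zero_on C r x).
  by move=> Ci ri; apply: IH (zero_on_range C r01) (card_support_zero_on Ci ri supp).
case/boolP: [exists i, (r i != 0) && (t i == i)] => [/existsP[i /andP[ri /eqP ti]]|fixed].
  rewrite (per_IB_fun_mx_fixed r ti) mulrC.
  apply: maxper_bounded_scale (IHC _ i (set11 i) ri) _ (sum_zero_on_le _ r0).
  by have /andP[? ?] := r01 i; apply/andP; split; lra.
case/boolP: [exists i, (r i != 0) && [forall y, (t y == i) ==> (r y == 0)]] =>
    [/existsP[i /andP[ri /forallP unreached]]|reached].
  have ti : t i != i.
    by apply: contraNneq fixed => ti; apply/existsP; exists i; rewrite ri ti eqxx.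
  rewrite (per_IB_fun_mx_unreached ti) => [|y ty]; last first.
    by apply/eqP; move: (unreached y); rewrite ty eqxx.
  rewrite -[per _]mulr1.
  apply: maxper_bounded_scale (IHC _ i (set11 i) ri) _ (sum_zero_on_le _ r0).
  by rewrite ler01 lexx.
case: (pickP [pred x | r x != 0]) => [i /= ri|r_0]; last first.
  by apply: per_IB_fun_mx0_bounded => x; apply/eqP/negbFE/r_0.
have moves x : r x != 0 -> t x != x.
  by move=> rx; apply: contraNneq fixed => tx; apply/existsP; exists x; rewrite rx tx eqxx.
have surj : [set x | r x != 0] \subset t @: [set x | r x != 0].
  apply/subsetP => x; rewrite inE => rx; move/existsPn: reached => /(_ x).
  rewrite rx /= => /forallPn[y]; rewrite negb_imply => /andP[/eqP <- ry].
  by rewrite imset_f ?inE.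
have [C [j [Ci Cj ij per_cycle]]] := per_IB_fun_mx_support_cycle ri moves surj.
exact: maxper_bounded_cycle_split r01 Ci Cj ij per_cycle (IHC _ _ Ci ri).
Qed.

End FunctionalBound.

Section RowDecomposition.
Variables (R : realFieldType) (n : nat) (A : 'M[R]_n).
Hypothesis A_row_substochastic : row_substochastic A.

Definition row_sum i : R := \sum_j A i j.

(* A zero row gets the point mass at [i]; any distribution would do. *)
Definition row_dist i j : R := if row_sum i == 0 then (i == j)%:R else A i j / row_sum i.

Lemma row_sum_range i : 0 <= row_sum i <= 1.
Proof.
by case: A_row_substochastic => A0 A1; rewrite A1 andbT sumr_ge0.
Qed.

Lemma row_dist_ge0 i j : 0 <= row_dist i j.
Proof.
case: A_row_substochastic => A0 _; rewrite /row_dist; case: ifP => _; first exact: ler0n.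
by rewrite divr_ge0 //; case/andP: (row_sum_range i).
Qed.

Lemma row_dist_sum1 i : \sum_j row_dist i j = 1.
Proof.
rewrite /row_dist; case: eqP => [_|/eqP si].
  by rewrite (bigD1 i) //= eqxx big1 ?addr0 // => j /negbTE; rewrite eq_sym => ->.
by rewrite -mulr_suml divff.
Qed.

Lemma IB_row_decomp i k : (1%:M - A) i k =
  \sum_j row_dist i j * ((i == k)%:R - row_sum i * (k == j)%:R).
Proof.
under eq_bigr => j _ do rewrite mulrBr.
rewrite sumrB -mulr_suml row_dist_sum1 mul1r !mxE; congr (_ - _).
rewrite (bigD1 k) //= big1 ?addr0 => [|j /negbTE]; last first.
  by rewrite eq_sym => ->; rewrite !mulr0.
rewrite eqxx mulr1 /row_dist; case: ifP => [/eqP si0|si0]; last by rewrite divfK ?si0.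
case: A_row_substochastic => A0 _.
by have := psumr_eq0P (fun j _ => A0 i j) si0 (isT : predT k) => ->; rewrite si0 mulr0.
Qed.

Lemma per_IB_row_decomp : per (1%:M - A) =
  \sum_(f : {ffun 'I_n -> 'I_n}) (\prod_i row_dist i (f i)) * per (1%:M - fun_mx f row_sum).
Proof.
rewrite /per.
under eq_bigr => s _ do under eq_bigr => i _ do rewrite IB_row_decomp.
under eq_bigr => s _ do rewrite bigA_distr_bigA /=.
rewrite exchange_big /=; apply: eq_bigr => f _.
rewrite big_distrr /=; apply: eq_bigr => s _.
by rewrite -big_split /=; apply: eq_bigr => i _; rewrite IB_fun_mxE.
Qed.

Lemma per_IB_le_maxper m : sigma A <= 2 * m%:R + 2 -> per (1%:M - A) <= maxper m (sigma A).
Proof.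
move=> Am; rewrite per_IB_row_decomp.
have -> : maxper m (sigma A) =
    \sum_(f : {ffun 'I_n -> 'I_n}) (\prod_i row_dist i (f i)) * maxper m (sigma A).
  rewrite -big_distrl /= -bigA_distr_bigA /=.
  by rewrite big1 ?mul1r // => i _; apply: row_dist_sum1.
apply: ler_sum => f _; apply: ler_wpM2l; first by apply: prodr_ge0 => i _; apply: row_dist_ge0.
by have [_] := per_IB_fun_mx_bounded f row_sum_range (max_card _); apply.
Qed.

End RowDecomposition.

Definition twin (m : nat) : nat := if odd m then m.-1 else m.+1.

Lemma twinK : involutive twin.
Proof.
by move=> m; rewrite /twin; case: (boolP (odd m)) => h; rewrite ?h ?(negbTE h); case: ifP; lia.
Qed.

Lemma twin_neq m : twin m != m.
Proof. by rewrite /twin; case: ifP; lia. Qed.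

Lemma half_eq_twin a b : ((a./2 == b./2) && (a != b))%N = (b == twin a).
Proof. by rewrite /twin; case: (boolP (odd a)) => h; apply/idP/idP; lia. Qed.

Section Extremal.
Variables (R : realFieldType) (n : nat) (s : R) (e : nat).
Hypothesis n_gt0 : (0 < n)%N.
Hypothesis s_le_n : (~~ odd n /\ s <= n%:R) \/ (odd n /\ s <= (n.-1)%:R).
Hypothesis e_even : ~~ odd e.
Hypothesis e_le_s : e%:R <= s.
Hypothesis s_lt_e2 : s < (e.+2)%:R.

Definition ext_val (m : nat) : R :=
  if (m < e)%N then 1 else if (m./2 == e./2)%N then (s - e%:R) / 2%:R else 0.

Lemma e_le_n : (e <= n)%N.
Proof.
rewrite -(ler_nat R); apply: le_trans e_le_s _.
by case: s_le_n => [[_ ->]|[_ /le_trans->]] //; rewrite ler_nat leq_pred.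
Qed.

Lemma ext_val_last_ge0 : 0 <= (s - e%:R) / 2%:R.
Proof. by rewrite divr_ge0 ?subr_ge0. Qed.

Lemma ext_val_last_lt1 : (s - e%:R) / 2%:R < 1.
Proof. by rewrite ltr_pdivrMr ?ltr0n // mul1r ltrBlDl -natrD addn2. Qed.

(* When [e] is [n] or [n - 1], the hypothesis on [s] forces [s = e]. *)
Lemma ext_val_last_eq0 : (n <= e.+1)%N -> (s - e%:R) / 2%:R = 0.
Proof.
move=> ne; have en := e_le_n; suff -> : s = e%:R by rewrite subrr mul0r.
apply/eqP; rewrite eq_le e_le_s andbT.
case: s_le_n => [[n_even sn]|[n_odd sn]]; apply: le_trans sn _; rewrite ler_nat; lia.
Qed.

Lemma ext_val_range m : 0 <= ext_val m <= 1.
Proof.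
have c0 := ext_val_last_ge0; have c1 := ext_val_last_lt1.
rewrite /ext_val; case: ifP => _; first by rewrite ler01 lexx.
by case: ifP => _; rewrite ?lexx ?ler01 // c0 ltW.
Qed.

Lemma ext_val_out m : (n <= m)%N || (n <= twin m)%N -> ext_val m = 0.
Proof.
move=> out; have en := e_le_n; rewrite /ext_val.
case: ifP => [m_e|_]; first by move: out m_e; rewrite /twin; case: (boolP (odd m)); lia.
case: ifP => // /eqP me; apply: ext_val_last_eq0.
by move: out me; rewrite /twin; case: (boolP (odd m)); lia.
Qed.

Lemma ext_val_half a b : (a./2 = b./2)%N -> ext_val a = ext_val b.
Proof.
move=> ab; rewrite /ext_val ab; congr (if _ then _ else _).
by apply/idP/idP; move: ab e_even; lia.
Qed.

Definition ord_twin (x : 'I_n) : 'I_n := insubd x (twin x).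

Lemma ord_twinE x : nat_of_ord (ord_twin x) = if (twin x < n)%N then twin x else x.
Proof. by rewrite val_insubd. Qed.

Lemma ord_twinK : involutive ord_twin.
Proof.
move=> x; apply: val_inj => /=; rewrite ord_twinE (ord_twinE x).
by case: (ltnP (twin x) n) => h; [rewrite twinK ltn_ord | rewrite ltnNge h].
Qed.

Lemma ord_twin_neq (x : 'I_n) : (twin x < n)%N -> ord_twin x != x.
Proof.
by move=> h; apply/eqP => /(congr1 val); rewrite /= ord_twinE h; apply/eqP/twin_neq.
Qed.

Definition twin_perm : {perm 'I_n} := perm (can_inj ord_twinK).

Lemma twin_permE x : twin_perm x = ord_twin x.
Proof. exact: permE. Qed.

Lemma extremal_fun_mx : extremal_matrix n e s = fun_mx ord_twin (fun x => ext_val x).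
Proof.
apply/matrixP => i j; rewrite !mxE half_eq_twin -/(ext_val i) mulrC.
have [ji|ji] := eqVneq (j : nat) (twin i).
  rewrite (_ : j == ord_twin i) ?mul1r //.
  by apply/eqP/val_inj; rewrite /= ord_twinE -ji ltn_ord.
have [jt|] := eqVneq j (ord_twin i); last by rewrite mulr0n mul0r.
move: ji; rewrite jt ord_twinE; case: ifP => [_ /eqP //|/negbT]; rewrite -leqNgt => tn _.
by rewrite ext_val_out ?mulr0 // tn orbT.
Qed.

Lemma extremal_sym i j : extremal_matrix n e s i j = extremal_matrix n e s j i.
Proof.
rewrite !mxE eq_sym [(j : nat) == i]eq_sym.
by case: ifP => // /andP[/eqP /ext_val_half].
Qed.

Lemma extremal_row_sum i : \sum_j extremal_matrix n e s i j = ext_val i.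
Proof.
rewrite extremal_fun_mx (bigD1 (ord_twin i)) //= big1 => [|j /negbTE ji].
  by rewrite mxE eqxx mulr1 addr0.
by rewrite mxE ji mulr0.
Qed.

Definition ext_prefix k (x : nat) : R := if (x < 2 * k)%N then ext_val x else 0.

Lemma twin_perm_orbit (i : 'I_n) : [set y | fconnect twin_perm i y] = [set i; ord_twin i].
Proof.
have iter_twin m : iter m twin_perm i = i \/ iter m twin_perm i = ord_twin i.
  elim: m => [|m IHm] /=; first by left.
  by case: IHm => ->; rewrite twin_permE ?ord_twinK; [right | left].
apply/setP => y; rewrite !inE; apply/idP/idP.
  by move/iter_findex <-; case: (iter_twin (findex twin_perm i y)) => ->; rewrite eqxx ?orbT.
by case/orP => /eqP ->; [exact: connect0 | rewrite -twin_permE; exact: fconnect1].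
Qed.

(* Removing the pairs [{2j, 2j+1}] one at a time, each a [2]-cycle of [twin_perm]. *)
Lemma per_IB_ext_prefix k :
  per (1%:M - fun_mx ord_twin (fun x => ext_prefix k x)) =
  \prod_(0 <= j < k) (1 + ext_val (2 * j)%N * ext_val (2 * j)%N.+1).
Proof.
elim: k => [|k IH]; first by rewrite big_geq // per_IB_fun_mx0.
rewrite big_nat_recr //= -IH.
have [k_in|k_out] := ltnP (2 * k)%N.+1 n; last first.
  rewrite [ext_val (2 * k)%N.+1]ext_val_out ?k_out // mulr0 addr0 mulr1.
  congr (per (_ - _)); apply: eq_fun_mx => x; rewrite /ext_prefix.
  case: (ltnP x (2 * k)%N) => x2k; first by rewrite ifT //; lia.
  case: ifP => // _; apply: ext_val_out; apply/orP; right.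
  by move: x2k k_out (ltn_ord x); rewrite /twin; case: (boolP (odd x)); lia.
set i : 'I_n := Ordinal (ltnW k_in).
have twin_i : twin i = (2 * k)%N.+1 by rewrite /twin /=; case: ifP; lia.
have twin_i' : ord_twin i = (2 * k)%N.+1 :> nat by rewrite ord_twinE twin_i k_in.
have i_moves : ord_twin i != i by apply: ord_twin_neq; rewrite twin_i.
have t_on_orbit y : fconnect twin_perm i y -> ord_twin y = twin_perm y /\ twin_perm y != y.
  move=> iy; have : y \in [set i; ord_twin i] by rewrite -twin_perm_orbit inE.
  by rewrite !inE twin_permE => /orP[] /eqP ->; split; rewrite ?ord_twinK // eq_sym.
rewrite (per_IB_fun_mx_cycle _ t_on_orbit) twin_perm_orbit cards2 eq_sym i_moves.
rewrite expr2 mulrNN mulr1 mul1r big_setU1 ?inE 1?eq_sym //= big_set1.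
congr (_ * (1 + _ * _)); last by rewrite /ext_prefix twin_i' ifT //; lia.
  congr (per (_ - _)); apply: eq_fun_mx => x; rewrite /zero_on /ext_prefix !inE.
  have [->|xi] := eqVneq x i; first by rewrite ltnn.
  have [->|xi'] := eqVneq x (ord_twin i).
    by rewrite twin_i' orbT [(_ < 2 * k)%N]ltnNge leqnSn.
  have x_ne : (x != (2 * k)%N :> nat) && (x != (2 * k)%N.+1 :> nat).
    rewrite -twin_i' -[(2 * k)%N]/(nat_of_ord i).
    by apply/andP; split; [move: xi | move: xi']; apply: contra => /eqP/val_inj ->.
  by rewrite /=; congr (if _ then _ else _); apply/idP/idP; move: x_ne; lia.
by rewrite /ext_prefix ifT //; lia.
Qed.

Lemma prod_ext_val : \prod_(0 <= j < n) (1 + ext_val (2 * j)%N * ext_val (2 * j)%N.+1) =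
  2 ^+ e./2 * (1 + ((s - e%:R) / 2%:R) ^+ 2).
Proof.
have en := e_le_n; have ee : (2 * e./2)%N = e by move: e_even; lia.
rewrite (big_cat_nat (n := e./2)) //=; last lia.
rewrite (big_cat_nat (m := e./2) (n := e./2.+1) (p := n)) //=; last lia.
rewrite big_nat1 (eq_big_nat _ _ (F2 := fun=> 2)) => [|j /andP[_ je]]; last first.
  by rewrite /ext_val !ifT ?mulr1 //; move: e_even; lia.
rewrite prodr_const_nat subn0 [X in _ * (_ * X)]big_nat_cond [X in _ * (_ * X)]big1.
  rewrite mulr1 ee /ext_val ltnn eqxx ifF ?ifT ?expr2 //; move: e_even; lia.
move=> j /andP[/andP[ej _] _]; rewrite /ext_val !ifF ?mul0r ?addr0 //; lia.
Qed.

Lemma sum_ext_val : \sum_(i < n) ext_val i = s.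
Proof.
have en := e_le_n.
(* Summing up to [n.+2] allows the split at [e.+2] also when [e = n]. *)
have -> : \sum_(i < n) ext_val i = \sum_(0 <= m < n.+2) ext_val m.
  rewrite -(big_mkord xpredT ext_val) !big_nat_recr //=.
  by rewrite ![ext_val n.+1]ext_val_out ?[ext_val n]ext_val_out ?addr0 ?leqnn ?leqnSn.
rewrite (big_cat_nat (n := e)) //=; last lia.
rewrite (big_cat_nat (m := e) (n := e.+2)) //=; last lia.
rewrite (eq_big_nat _ _ (F2 := fun=> 1)) => [|j /andP[_ je]]; last by rewrite /ext_val je.
rewrite sumr_const_nat subn0 [X in _ + (_ + X)]big_nat_cond [X in _ + (_ + X)]big1.
  rewrite big_nat_recr //= big_nat1 /ext_val ltnn eqxx ifF ?ifT; last 2 first.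
  - by move: e_even; lia.
  - lia.
  by rewrite addr0; field.
move=> j /andP[/andP[ej _] _]; rewrite /ext_val !ifF //; move: e_even; lia.
Qed.

Lemma per_IB_extremal :
  per (1%:M - extremal_matrix n e s) = 2 ^+ e./2 * (1 + ((s - e%:R) / 2%:R) ^+ 2).
Proof.
rewrite extremal_fun_mx (@eq_fun_mx _ _ _ _ (fun x => ext_prefix n x)) => [|x].
  by rewrite per_IB_ext_prefix prod_ext_val.
by rewrite /ext_prefix ifT //; have := ltn_ord x; lia.
Qed.

Lemma extremal_row_substochastic : row_substochastic (extremal_matrix n e s).
Proof.
split=> [i j|i]; last by rewrite extremal_row_sum; case/andP: (ext_val_range i).
by rewrite extremal_fun_mx mxE mulr_ge0 ?ler0n //; case/andP: (ext_val_range i).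
Qed.

Lemma extremal_doubly_substochastic : doubly_substochastic (extremal_matrix n e s).
Proof.
split=> [|j]; first exact: extremal_row_substochastic.
under eq_bigr => i _ do rewrite extremal_sym.
by rewrite extremal_row_sum; case/andP: (ext_val_range j).
Qed.

Lemma sigma_extremal : sigma (extremal_matrix n e s) = s.
Proof.
by rewrite /sigma; under eq_bigr => i _ do rewrite extremal_row_sum; exact: sum_ext_val.
Qed.

End Extremal.

Theorem mainTheorem12 (R : realFieldType) (n : nat) (s : R) (e : nat)
  (hn : (1 <= n)%N) (hs0 : 0 <= s)
  (hns : (~~ odd n /\ s <= n%:R) \/ (odd n /\ s <= (n.-1)%:R))
  (he_even : ~~ odd e) (he_le : e%:R <= s) (he_gt : s < (e.+2)%:R) :
  let val := 2%:R ^+ e./2 * (1 + ((s - e%:R) / 2%:R) ^+ 2) in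
  (forall A : 'M[R]_n, omega_tilde s A -> per (1%:M - A) <= val) /\
  let W := extremal_matrix n e s in
  omega_tilde s W /\ doubly_substochastic W /\ per (1%:M - W) = val.
Proof.
move=> val; split=> [A [A_row sigmaA]|W].
  have e_half : 2 * (e./2)%:R = e%:R :> R.
    by rewrite -natrM; congr _%:R; move: he_even; lia.
  have sigma_le : sigma A <= 2 * (e./2)%:R + 2.
    by rewrite sigmaA e_half; move: he_gt; rewrite -addn2 natrD; lra.
  by have := per_IB_le_maxper A_row sigma_le; rewrite sigmaA maxper_above e_half.
split; first by split; [exact: extremal_row_substochastic | exact: sigma_extremal].
split; first exact: extremal_doubly_substochastic.
exact: per_IB_extremal.
Qed.
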